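(* \begin{enumerate} \item If $n+1$ is a prime power, then for any $2\leq t \leq n$ there is a lattice packing of $\mathbb{Z}^n$ by $\mathcal{B}(n,t,1,0)$ with density \[\delta=\frac{\sum_{i=0}^t\binom{n}{i} }{(n+1)^t-1}=\frac{1}{t!}+o(1).\] \item If $n$ is a prime power, then for any $2\leq t \leq n$ there is a lattice packing of $\mathbb{Z}^n$ by $\mathcal{B}(n,t,1,0)$ with density \[\delta=\frac{\sum_{i=0}^t\binom{n}{i}}{(n^{t+1}-1)/(n-1)}=\frac{1}{t!}+o(1).\] \end{enumerate} Here $o(1)$ refers to $n\to\infty$ with $t$ fixed.
   Context: $\mathcal{B}(n,t,k_+,k_-)=\{\mathbf{x}\in\mathbb{Z}^n : -k_-\le x_i\le k_+ \text{ for all } i,\ \mathrm{wt}(\mathbf{x})\le t\}$, where $\mathrm{wt}$ is the Hamming weight. A lattice packing of $\mathbb{Z}^n$ by $\mathcal{B}$ is a lattice $\Lambda\subseteq\mathbb{Z}^n$ (additive subgroup) such that the translates $\mathbf{v}+\mathcal{B}$, $\mathbf{v}\in\Lambda$, are pairwise disjoint; its density is $|\mathcal{B}|/\mathrm{vol}(\Lambda)$, where $\mathrm{vol}(\Lambda)=|\mathbb{Z}^n/\Lambda|$. *)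

From mathcomp Require Import all_boot all_order all_algebra.
Set Implicit Arguments. Unset Strict Implicit. Unset Printing Implicit Defensive.
Import Order.TTheory GRing.Theory Num.Theory.
Local Open Scope ring_scope.

Definition wt (n : nat) (x : 'rV[int]_n) : nat := #|[set i : 'I_n | x 0 i != 0]|.

(* Codes for vectors with entries in [-km, kp]: c i in {0..kp+km} encodes c i - km *)
Definition embed (n kp km : nat) (c : {ffun 'I_n -> 'I_(kp + km).+1}) : 'rV[int]_n :=
  \row_i ((nat_of_ord (c i))%:Z - km%:Z).

Definition ball_code (n t kp km : nat) : {set {ffun 'I_n -> 'I_(kp + km).+1}} :=
  [set c | (wt (embed c) <= t)%N].

Definition in_ball (n t kp km : nat) (x : 'rV[int]_n) : Prop :=
  (forall i, - (km%:Z) <= x 0 i <= kp%:Z) /\ (wt x <= t)%N.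

(* |B(n,t,kp,km)| (embed is a bijection from ball_code onto the ball) *)
Definition ball_size (n t kp km : nat) : nat := #|ball_code n t kp km|.

Definition is_lattice (n : nat) (L : 'rV[int]_n -> Prop) : Prop :=
  L 0 /\ (forall x y, L x -> L y -> L (x - y)).

(* vol(Lambda) = |Z^n / Lambda| = V : a complete system of V pairwise
   incongruent coset representatives *)
Definition lattice_vol (n : nat) (L : 'rV[int]_n -> Prop) (V : nat) : Prop :=
  exists r : 'I_V -> 'rV[int]_n,
    (forall i j, L (r i - r j) -> i = j) /\ (forall x, exists i, L (x - r i)).

Definition is_packing (n t kp km : nat) (L : 'rV[int]_n -> Prop) : Prop :=
  forall v w b1 b2, L v -> L w -> in_ball t kp km b1 -> in_ball t kp km b2 ->
    v + b1 = w + b2 -> v = w.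

Definition lattice_packing_with_density (n t kp km : nat) (d : rat) : Prop :=
  exists (L : 'rV[int]_n -> Prop) (V : nat),
    [/\ is_lattice L, lattice_vol L V, is_packing t kp km L &
        d = (ball_size n t kp km)%:R / V%:R].

Definition prime_power (m : nat) : Prop := exists p k, prime p /\ (0 < k)%N /\ m = (p ^ k)%N.

Definition delta1 (n t : nat) : rat :=
  (\sum_(i < t.+1) 'C(n, i))%N%:R / ((n.+1 ^ t)%N%:R - 1).

Definition delta2 (n t : nat) : rat :=
  (\sum_(i < t.+1) 'C(n, i))%N%:R / (((n ^ t.+1)%N%:R - 1) / (n%:R - 1)).

From mathcomp Require Import all_boot all_order all_algebra all_field.
From mathcomp Require Import ring lra zify.
From mathcomp Require cyclic.
Import Order.TTheory GRing.Theory Num.Theory.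
Set Implicit Arguments. Unset Strict Implicit. Unset Printing Implicit Defensive.

(* Both packings are kernels of homomorphisms Z^n -> K^*, x |-> prod_i h_i^x_i,
   onto a cyclic group of order V in a finite field K: such a kernel has index V,
   and it packs B(n,t,1,0) as soon as the products of at most t of the h_i are
   pairwise distinct.  Let psi generate K^*, q = p^a, and let c range over GF(q).
   For n + 1 = q and K = GF(q^t) take h_c = 1 + c (psi - 1), c <> 0: equal
   subproducts make the polynomials prod (1 + c X) agree at 0 and at the t Frobenius
   conjugates of psi - 1, so they coincide, and so do their sets of roots.
   For n = q and K = GF(q^(t+1)) take h_c = (psi + c)^(q-1), of order
   (q^(t+1) - 1)/(q - 1): equal subproducts make the products of the X + c
   proportional at psi with a ratio in GF(q)^*, hence at the t + 1 conjugates of psi.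
   The densities are sum_(i<=t) C(n,i) / V with n^t <= V <= (n+1)^t, and
   t! sum_(i<=t) C(n,i) = n^t + O(n^(t-1)). *)

Lemma card_small_sets (T : finType) t :
  #|[set S : {set T} | #|S| <= t]| = \sum_(i < t.+1) 'C(#|T|, i).
Proof.
elim: t => [|t IHt].
  by rewrite big_ord1 -card_draws; apply: eq_card => S; rewrite !inE leqn0.
rewrite big_ord_recr /= -IHt -card_draws -cardsUI.
have -> : [set S : {set T} | #|S| <= t] :&: [set S : {set T} | #|S| == t.+1] = set0.
  by apply/setP => S; rewrite !inE andbC; case: eqP => // ->; rewrite ltnn.
by rewrite cards0 addn0; apply: eq_card => S; rewrite !inE leq_eqVlt ltnS orbC.
Qed.

Definition code_support n (c : {ffun 'I_n -> 'I_(1 + 0).+1}) : {set 'I_n} :=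
  [set i | c i != 0 :> nat].

Lemma code_support_inj n : injective (@code_support n).
Proof.
move=> c1 c2 e; apply/ffunP => i; apply/val_inj.
have /[!inE] : (i \in code_support c1) = (i \in code_support c2) by rewrite e.
by case: (c1 i) => [[|[|?]] ?]; case: (c2 i) => [[|[|?]] ?].
Qed.

Lemma ball_size_binary n t : ball_size n t 1 0 = \sum_(i < t.+1) 'C(n, i).
Proof.
rewrite -[n in RHS]card_ord -card_small_sets /ball_size.
rewrite -(card_imset _ (@code_support_inj n)); apply: eq_card => S; rewrite inE.
have wt_embed (c : {ffun 'I_n -> 'I_(1 + 0).+1}) : wt (embed c) = #|code_support c|.
  by apply: eq_card => i; rewrite !inE mxE subr0.
apply/imsetP/idP => [[c] | small_S]; first by rewrite inE wt_embed => small_c ->.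
pose c0 : {ffun 'I_n -> 'I_(1 + 0).+1} := [ffun i => inord (i \in S)].
have c0_S : code_support c0 = S.
  by apply/setP => i; rewrite inE ffunE inordK; case: (i \in S).
by exists c0; rewrite // inE wt_embed c0_S.
Qed.

Lemma leq_wexp2r m n e : m <= n -> m ^ e <= n ^ e.
Proof. by case: e => // e; rewrite leq_exp2r. Qed.

Lemma ffact_leq_exp n t : n ^_ t <= n ^ t.
Proof.
rewrite ffact_prod -[t in n ^ t]card_ord -prod_nat_const.
by apply: leq_prod => i _; apply: leq_subr.
Qed.

Lemma exp_leq_ffact n t : (n - t) ^ t <= n ^_ t.
Proof.
rewrite ffact_prod -[t in _ ^ t]card_ord -prod_nat_const.
by apply: leq_prod => i _; apply: leq_sub2l; apply: ltnW.
Qed.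

Lemma bin_leq_exp n i : 'C(n, i) <= n ^ i.
Proof.
by rewrite (leq_trans _ (ffact_leq_exp n i)) // -bin_ffact leq_pmulr ?fact_gt0.
Qed.

Lemma expnD_leq a d k : (a + d) ^ k <= a ^ k + k * d * (a + d) ^ k.-1.
Proof.
rewrite -leq_subLR subn_exp addKn (mulnC k) -mulnA leq_mul2l; apply/orP; right.
rewrite -[k in k * _]card_ord -sum_nat_const leq_sum // => i _.
have i_k : i <= k.-1 by have := ltn_ord i; lia.
rewrite -{2}(subnK i_k) expnD leq_mul2l leq_wexp2r ?leq_addr ?orbT //.
Qed.

Lemma fact_binomial_sum_leq n t : 0 < n ->
  t`! * \sum_(i < t.+1) 'C(n, i) <= n ^ t + t * t`! * n ^ t.-1.
Proof.
move=> n_gt0; rewrite big_ord_recr /= mulnDr addnC leq_add //.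
  by rewrite mulnC bin_ffact ffact_leq_exp.
rewrite [t * _]mulnC -mulnA leq_mul2l; apply/orP; right.
rewrite -[t in t * _]card_ord -sum_nat_const leq_sum // => i _.
by rewrite (leq_trans (bin_leq_exp _ _)) // leq_pexp2l //; have := ltn_ord i; lia.
Qed.

Lemma fact_binomial_sum_geq n t : (n - t) ^ t <= t`! * \sum_(i < t.+1) 'C(n, i).
Proof.
rewrite big_ord_recr /= mulnDr (leq_trans _ (leq_addl _ _)) //.
by rewrite mulnC bin_ffact exp_leq_ffact.
Qed.

Lemma fact_binomial_sum_near n t B : 0 < t <= n -> n ^ t <= B <= n.+1 ^ t ->
  t`! * \sum_(i < t.+1) 'C(n, i) <= B + t * t`! * n ^ t.-1 /\
  B <= t`! * \sum_(i < t.+1) 'C(n, i) + t * t.+1 * 2 ^ t.-1 * n ^ t.-1.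
Proof.
move=> /andP[t_gt0 t_n] /andP[n_B B_n]; have n_gt0 : 0 < n by lia.
split; first by rewrite (leq_trans (fact_binomial_sum_leq _ n_gt0)) // leq_add2r.
have succ_pow : n.+1 ^ t.-1 <= 2 ^ t.-1 * n ^ t.-1.
  by rewrite -expnMn leq_wexp2r //; lia.
rewrite (leq_trans B_n) // (leq_trans _ (leq_add (fact_binomial_sum_geq n t) (leqnn _))) //.
have := expnD_leq (n - t) t.+1 t; rewrite (_ : n - t + t.+1 = n.+1); last by lia.
by move/leq_trans; apply; rewrite leq_add2l -(mulnA (t * t.+1)) leq_mul2l succ_pow orbT.
Qed.

Local Open Scope ring_scope.

Definition row_support n (x : 'rV[int]_n) : {set 'I_n} := [set i | x 0 i != 0].

Lemma binary_ball_row_support n t (x : 'rV[int]_n) :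
  in_ball t 1 0 x -> x = \row_i ((i \in row_support x) : nat)%:Z.
Proof. by case=> x01 _; apply/rowP => i; rewrite mxE inE; have := x01 i; lia. Qed.

Section MonomialKernel.

Variables (K : fieldType) (n : nat) (h : 'I_n -> K).

Definition monomial_eval (x : 'rV[int]_n) : K := \prod_i h i ^ x 0 i.

Definition monomial_kernel (x : 'rV[int]_n) : Prop := monomial_eval x = 1.

Lemma monomial_eval_indicator (S : {set 'I_n}) :
  monomial_eval (\row_i ((i \in S) : nat)%:Z) = \prod_(i in S) h i.
Proof.
by rewrite [RHS]big_mkcond; apply: eq_bigr => i _; rewrite mxE; case: (i \in S).
Qed.

Lemma monomial_eval_delta i0 (j : nat) :
  monomial_eval (j%:Z *: delta_mx 0 i0) = h i0 ^+ j.
Proof.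
rewrite /monomial_eval (bigD1 i0) //= big1 => [|i /negbTE i_i0].
  by rewrite !mxE !eqxx mulr1 mulr1.
by rewrite !mxE i_i0 mulr0.
Qed.

Lemma monomial_eval_unity V x : (forall i, h i ^+ V = 1) -> monomial_eval x ^+ V = 1.
Proof.
move=> h_unity; rewrite -prodrXl big1 // => i _.
by rewrite -[_ ^+ V]/(_ ^ V%:Z) exprzAC -[h i ^ V]/(h i ^+ V) h_unity exp1rz.
Qed.

Hypothesis h_neq0 : forall i, h i != 0.

Lemma monomial_evalD x y : monomial_eval (x + y) = monomial_eval x * monomial_eval y.
Proof.
rewrite -big_split; apply: eq_bigr => i _.
by rewrite mxE exprzDr // unitfE h_neq0.
Qed.

Lemma monomial_eval_neq0 x : monomial_eval x != 0.
Proof. by rewrite prodf_seq_neq0; apply/allP => i _; rewrite expfz_neq0 ?h_neq0. Qed.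

Lemma monomial_evalB x y : monomial_eval (x - y) = monomial_eval x / monomial_eval y.
Proof.
by apply: (canRL (mulfK (monomial_eval_neq0 y))); rewrite -monomial_evalD subrK.
Qed.

Lemma monomial_kernel_lattice : is_lattice monomial_kernel.
Proof.
split=> [|x y]; first by rewrite /monomial_kernel /monomial_eval big1 // => i _; rewrite mxE.
by rewrite /monomial_kernel monomial_evalB => -> ->; rewrite divr1.
Qed.

Lemma monomial_kernel_vol V i0 :
  V.-primitive_root (h i0) -> (forall i, h i ^+ V = 1) -> lattice_vol monomial_kernel V.
Proof.
move=> h_prim h_unity; exists (fun j : 'I_V => j%:Z *: delta_mx 0 i0).
split=> [j k | x].
  rewrite /monomial_kernel monomial_evalB !monomial_eval_delta => /divr1_eq /eqP.
  by rewrite (eq_prim_root_expr h_prim) !modn_small // => /eqP /val_inj.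
have [j x_j] := prim_rootP h_prim (monomial_eval_unity x h_unity).
exists j; rewrite /monomial_kernel monomial_evalB monomial_eval_delta -x_j.
by rewrite divff ?monomial_eval_neq0.
Qed.

Lemma monomial_kernel_packing t :
  (forall S1 S2 : {set 'I_n}, (#|S1| <= t)%N -> (#|S2| <= t)%N ->
     \prod_(i in S1) h i = \prod_(i in S2) h i -> S1 = S2) ->
  is_packing t 1 0 monomial_kernel.
Proof.
move=> subprod_inj v w b1 b2 Lv Lw b1_ball b2_ball v_b1_w_b2.
have eval_eq : monomial_eval b1 = monomial_eval b2.
  apply/divr1_eq; rewrite -monomial_evalB.
  have -> : b1 - b2 = w - v by rewrite -[b1](addKr v) v_b1_w_b2 addrA addrK addrC.
  by rewrite monomial_evalB Lv Lw divr1.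
have supp_eq : row_support b1 = row_support b2.
  apply: subprod_inj; [by case: b1_ball | by case: b2_ball |].
  by rewrite -!monomial_eval_indicator -(binary_ball_row_support b1_ball)
    -(binary_ball_row_support b2_ball).
move: v_b1_w_b2; rewrite (binary_ball_row_support b1_ball).
by rewrite (binary_ball_row_support b2_ball) supp_eq; apply: addIr.
Qed.

End MonomialKernel.

Lemma lattice_packing_of_subproducts (K : fieldType) n V (h : 'I_n -> K) i0 t :
  V.-primitive_root (h i0) -> (forall i, h i ^+ V = 1) ->
  (forall S1 S2 : {set 'I_n}, (#|S1| <= t)%N -> (#|S2| <= t)%N ->
     \prod_(i in S1) h i = \prod_(i in S2) h i -> S1 = S2) ->
  lattice_packing_with_density n t 1 0 ((ball_size n t 1 0)%:R / V%:R).
Proof.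
move=> h_prim h_unity subprod_inj.
have h_neq0 i : h i != 0.
  apply: contra_eq_neq (h_unity i) => ->.
  by rewrite expr0n gtn_eqF ?(prim_order_gt0 h_prim) // eq_sym oner_eq0.
exists (monomial_kernel h), V; split=> //.
- exact: monomial_kernel_lattice.
- exact: monomial_kernel_vol h_prim h_unity.
- exact: monomial_kernel_packing.
Qed.

Section LinearProducts.

Variables (K : fieldType) (I : finType) (a b : I -> K).

Definition linear_prod (S : {set I}) : {poly K} := \prod_(i in S) (a i *: 'X + (b i)%:P).

Lemma horner_linear_prod S y : (linear_prod S).[y] = \prod_(i in S) (a i * y + b i).
Proof. by rewrite horner_prod; apply: eq_bigr => i _; rewrite !hornerE. Qed.

Hypotheses (a_neq0 : forall i, a i != 0) (ba_inj : injective (fun i => b i / a i)).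

Lemma size_linear_prod S : size (linear_prod S) = #|S|.+1.
Proof.
have size_factor i : size (a i *: 'X + (b i)%:P) = 2%N.
  by rewrite -mul_polyC size_MXaddC polyC_eq0 (negbTE (a_neq0 i)) size_polyC a_neq0.
rewrite /linear_prod size_prod => [|i _]; last by rewrite -size_poly_eq0 size_factor.
rewrite (eq_bigr _ (fun i _ => size_factor i)) sum_nat_const (eq_card (B := S)) //; lia.
Qed.

Lemma root_linear_prod S i : root (linear_prod S) (- (b i / a i)) = (i \in S).
Proof.
have factor_eq j : a j * - (b i / a i) + b j = a j * (b j / a j - b i / a i).
  by rewrite mulrBr mulrCA divff ?a_neq0 // mulr1 mulrN addrC.
rewrite /root horner_linear_prod; apply/prodf_eq0/idP => [[j j_S] | i_S].
  by rewrite factor_eq mulf_eq0 (negbTE (a_neq0 j)) subr_eq0 => /eqP /ba_inj <-.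
by exists i; rewrite // factor_eq subrr mulr0.
Qed.

Lemma eq_set_of_linear_prod_evals (lam : K) (S1 S2 : {set I}) (rs : seq K) :
  lam != 0 -> uniq rs -> (#|S1| < size rs)%N -> (#|S2| < size rs)%N ->
  (forall y, y \in rs -> (linear_prod S1).[y] = lam * (linear_prod S2).[y]) ->
  S1 = S2.
Proof.
move=> lam_neq0 rs_uniq S1_rs S2_rs evals_eq.
have prod_eq : linear_prod S1 = lam *: linear_prod S2.
  apply/eqP; rewrite -subr_eq0; apply/negPn/negP => D_neq0.
  have rs_roots : all (root (linear_prod S1 - lam *: linear_prod S2)) rs.
    by apply/allP => y /evals_eq; rewrite /root hornerD hornerN hornerZ => ->; rewrite subrr.
  have D_size : (size (linear_prod S1 - lam *: linear_prod S2)%R <= size rs)%N.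
    rewrite (leq_trans (size_polyD _ _)) // size_polyN geq_max size_linear_prod S1_rs.
    by rewrite (leq_trans (size_scale_leq _ _)) ?size_linear_prod.
  by have := max_poly_roots D_neq0 rs_roots rs_uniq; rewrite ltnNge D_size.
by apply/setP => i; rewrite -!root_linear_prod prod_eq rootZ.
Qed.

End LinearProducts.

Lemma expr_fixed_iter (R : pzSemiRingType) (x : R) q e : x ^+ q = x -> x ^+ (q ^ e) = x.
Proof. by move=> x_q; elim: e => [|e IHe]; rewrite ?expr1 // expnSr exprM IHe x_q. Qed.

Lemma horner_linear_prod_frobenius (K : fieldType) (I : finType) (a b : I -> K) q S y :
  [pchar K].-nat q -> (forall i, a i ^+ q = a i) -> (forall i, b i ^+ q = b i) ->
  (linear_prod a b S).[y] ^+ q = (linear_prod a b S).[y ^+ q].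
Proof.
move=> q_pchar a_fixed b_fixed; rewrite !horner_linear_prod -prodrXl.
by apply: eq_bigr => i _; rewrite exprDn_pchar // exprMn a_fixed b_fixed.
Qed.

Lemma linear_prod_evals_conjugate (K : fieldType) (I : finType) (a b : I -> K) q
    (lam : K) S1 S2 y e :
  [pchar K].-nat q -> (forall i, a i ^+ q = a i) -> (forall i, b i ^+ q = b i) ->
  lam ^+ q = lam ->
  (linear_prod a b S1).[y] = lam * (linear_prod a b S2).[y] ->
  (linear_prod a b S1).[y ^+ (q ^ e)] = lam * (linear_prod a b S2).[y ^+ (q ^ e)].
Proof.
move=> q_pchar a_fixed b_fixed lam_fixed evals_eq.
have qe_pchar : [pchar K].-nat (q ^ e)%N by rewrite pnatX q_pchar.
have fixed_qe (x : K) : x ^+ q = x -> x ^+ (q ^ e) = x by apply: expr_fixed_iter.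
have fixed_a i := fixed_qe _ (a_fixed i); have fixed_b i := fixed_qe _ (b_fixed i).
rewrite -!(@horner_linear_prod_frobenius _ _ a b _ _ _ qe_pchar fixed_a fixed_b).
by rewrite evals_eq exprMn fixed_qe.
Qed.

Lemma finField_prim_root (K : finFieldType) : {z : K | (#|K|.-1).-primitive_root z}.
Proof.
pose units := [seq x <- enum K | x != 0].
have card_gt0 : (0 < #|K|.-1)%N by rewrite -subn1 subn_gt0 finNzRing_gt1.
have units_unity : all (#|K|.-1).-unity_root units.
  apply/allP => x; rewrite mem_filter => /andP[x_neq0 _]; rewrite unity_rootE.
  have := expf_card x; rewrite -(ltn_predK (finNzRing_gt1 K)) exprS => x_card.
  by apply/eqP; apply: (mulfI x_neq0); rewrite mulr1.
have units_uniq : uniq units by rewrite filter_uniq ?enum_uniq.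
have units_size : (#|K|.-1 <= size units)%N.
  by rewrite size_filter -(cardC1 (0 : K)) cardE size_filter enumT.
apply: sigW; have [z _ z_prim] := hasP (cyclic.has_prim_root card_gt0 units_unity
  units_uniq units_size).
by exists z.
Qed.

Lemma expf_card_pred (K : finFieldType) (x : K) : x != 0 -> x ^+ #|K|.-1 = 1.
Proof.
move=> x_neq0; apply: (mulfI x_neq0); rewrite mulr1 -exprS.
by rewrite (ltn_predK (finNzRing_gt1 K)) expf_card.
Qed.

Lemma exprBn_pchar (K : fieldType) (x y : K) q :
  [pchar K].-nat q -> (x - y) ^+ q = x ^+ q - y ^+ q.
Proof. by move=> q_pchar; rewrite exprDn_pchar // exprNn_pchar. Qed.

Lemma affine_neq0_of_not_fixed (K : fieldType) q (a b y : K) :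
  [pchar K].-nat q -> a ^+ q = a -> b ^+ q = b -> a != 0 -> y ^+ q != y ->
  a * y + b != 0.
Proof.
move=> q_pchar a_fixed b_fixed a_neq0; apply: contra_neq => /eqP.
rewrite addr_eq0 => /eqP ay_b; have -> : y = - b / a by rewrite -ay_b mulrC mulKf.
by rewrite exprMn exprNn_pchar // exprVn a_fixed b_fixed.
Qed.

Section PrimitiveRootPowers.

Variables (K : fieldType) (q : nat) (z : K).

Lemma frobenius_exp_lt d e : (1 < q)%N -> (1 < d)%N -> (e < d)%N -> (q ^ e < (q ^ d).-1)%N.
Proof.
move=> q_gt1 d_gt1 e_d; have q_gt0 : (0 < q)%N by lia.
have : (q ^ e <= q ^ d.-1)%N by rewrite leq_pexp2l //; lia.
have : (q <= q ^ d.-1)%N by rewrite -{1}(expn1 q) leq_pexp2l //; lia.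
have -> : (q ^ d = q * q ^ d.-1)%N by rewrite -expnS prednK //; lia.
nia.
Qed.

Lemma prim_root_frobenius_inj d e1 e2 : (1 < q)%N -> (1 < d)%N ->
  (q ^ d).-1.-primitive_root z -> (e1 < d)%N -> (e2 < d)%N ->
  z ^+ (q ^ e1) = z ^+ (q ^ e2) -> e1 = e2.
Proof.
move=> q_gt1 d_gt1 z_prim e1_d e2_d /eqP; rewrite (eq_prim_root_expr z_prim).
by rewrite !modn_small ?frobenius_exp_lt // => /eqP /expnI; apply.
Qed.

Lemma prim_root_frobenius_neq1 d e : (1 < q)%N -> (1 < d)%N ->
  (q ^ d).-1.-primitive_root z -> (e < d)%N -> z ^+ (q ^ e) != 1.
Proof.
move=> q_gt1 d_gt1 z_prim e_d; rewrite -(prim_order_dvd z_prim).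
have qe_lt := frobenius_exp_lt q_gt1 d_gt1 e_d.
by apply/negP => /dvdn_leq; rewrite expn_gt0; lia.
Qed.

Variable s : nat.
Hypothesis z_prim : (q.-1 * s).-primitive_root z.

Lemma prim_root_subfield_fixed j : (0 < q)%N -> (z ^+ (j * s)) ^+ q = z ^+ (j * s).
Proof.
move=> q_gt0; rewrite -(prednK q_gt0) exprS -exprM.
have -> : (j * s * q.-1 = q.-1 * s * j)%N by rewrite mulnC mulnA mulnAC.
by rewrite [z ^+ (_ * s * j)]exprM (prim_expr_order z_prim) expr1n mulr1.
Qed.

Lemma prim_root_subfield_inj j k : (j < q.-1)%N -> (k < q.-1)%N ->
  z ^+ (j * s) = z ^+ (k * s) -> j = k.
Proof.
have s_gt0 : (0 < s)%N by have := prim_order_gt0 z_prim; rewrite muln_gt0 => /andP[].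
move=> j_q k_q /eqP; rewrite (eq_prim_root_expr z_prim).
by rewrite !modn_small ?ltn_pmul2r // eqn_pmul2r // => /eqP.
Qed.

End PrimitiveRootPowers.

Lemma lattice_packing_from_field_pow_t (K : finFieldType) n t :
  [pchar K].-nat n.+1 -> #|K| = (n.+1 ^ t)%N -> (1 < t)%N -> (0 < n)%N ->
  lattice_packing_with_density n t 1 0 ((ball_size n t 1 0)%:R / ((n.+1 ^ t).-1)%:R).
Proof.
move=> q_pchar K_card t_gt1 n_gt0; have q_gt1 : (1 < n.+1)%N by [].
have [psi] := finField_prim_root K; rewrite K_card => psi_prim.
have conj_inj := prim_root_frobenius_inj q_gt1 t_gt1 psi_prim.
have conj_neq1 := prim_root_frobenius_neq1 q_gt1 t_gt1 psi_prim.
have order_eq : ((n.+1 ^ t).-1 = n.+1.-1 * \sum_(i < t) n.+1 ^ i)%N by rewrite predn_exp.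
set s := (\sum_(i < t) _)%N in order_eq.
have psi_sub : (n.+1.-1 * s).-primitive_root psi by rewrite -order_eq.
pose c (j : 'I_n) := psi ^+ (j * s).
have c_fixed j : c j ^+ n.+1 = c j := prim_root_subfield_fixed psi_sub j (ltn0Sn n).
have c_inj : injective c.
  by move=> j k /(prim_root_subfield_inj psi_sub (ltn_ord j) (ltn_ord k)) /val_inj.
have c_neq0 j : c j != 0.
  by rewrite expf_neq0 // (prim_root_eq0 psi_prim) -lt0n (leq_ltn_trans _
    (frobenius_exp_lt q_gt1 t_gt1 (ltnW t_gt1))) ?expn_gt0.
pose phi := psi - 1.
have phi_conj e : phi ^+ (n.+1 ^ e) = psi ^+ (n.+1 ^ e) - 1.
  by rewrite exprBn_pchar ?expr1n // pnatX q_pchar.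
have phi_not_fixed : phi ^+ n.+1 != phi.
  apply/eqP => phi_fixed; have psi_fixed : psi ^+ (n.+1 ^ 1) = psi ^+ (n.+1 ^ 0).
    by rewrite expn0 expr1; apply: (subIr 1); rewrite -phi_conj expn1.
  by have := @conj_inj 1 0 t_gt1 (ltnW t_gt1) psi_fixed.
pose g j := c j * phi + 1.
have g_neq0 j : g j != 0.
  exact: affine_neq0_of_not_fixed q_pchar (c_fixed j) (expr1n _ _) (c_neq0 j) phi_not_fixed.
pose i0 : 'I_n := Ordinal n_gt0.
have g_i0 : g i0 = psi by rewrite /g /c mul0n expr0 mul1r subrK.
apply: (lattice_packing_of_subproducts (h := g) (i0 := i0)) => [||S1 S2 S1_t S2_t prod_eq].
- by rewrite g_i0.
- by move=> j; rewrite -K_card expf_card_pred.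
have eval_phi S : (linear_prod c (fun=> 1) S).[phi] = \prod_(i in S) g i.
  by rewrite horner_linear_prod.
apply: (eq_set_of_linear_prod_evals (b := fun=> 1) c_neq0 _ (oner_neq0 K)
  (rs := 0 :: [seq phi ^+ (n.+1 ^ e) | e <- iota 0 t])) => [i j | | | | y].
- by rewrite /= !div1r => /invr_inj /c_inj.
- rewrite /= map_inj_in_uniq ?iota_uniq => [|i j]; last first.
    rewrite !mem_iota => /andP[_ i_t] /andP[_ j_t].
    by rewrite !phi_conj => /subIr /conj_inj; apply.
  rewrite andbT; apply/mapP => [[e]]; rewrite mem_iota => /andP[_ e_t] /esym /eqP.
  by rewrite phi_conj subr_eq0 (negbTE (conj_neq1 e e_t)).
- by rewrite /= size_map size_iota ltnS.
- by rewrite /= size_map size_iota ltnS.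
rewrite inE => /predU1P [-> | /mapP [e _ ->]].
  by rewrite !horner_linear_prod !big1 ?mulr1 // => i _; rewrite mulr0 add0r.
apply: linear_prod_evals_conjugate q_pchar c_fixed _ (expr1n _ _) _ => [i|].
  exact: expr1n.
by rewrite mul1r !eval_phi.
Qed.

Lemma lattice_packing_from_field_pow_t1 (K : finFieldType) n t :
  [pchar K].-nat n -> #|K| = (n ^ t.+1)%N -> (1 < n)%N -> (0 < t)%N ->
  lattice_packing_with_density n t 1 0
    ((ball_size n t 1 0)%:R / (\sum_(i < t.+1) n ^ i)%N%:R).
Proof.
move=> q_pchar K_card n_gt1 t_gt0; have d_gt1 : (1 < t.+1)%N by [].
have n_gt0 : (0 < n)%N by lia.
have [psi] := finField_prim_root K; rewrite K_card => psi_prim.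
have conj_inj := prim_root_frobenius_inj n_gt1 d_gt1 psi_prim.
have order_eq : ((n ^ t.+1).-1 = n.-1 * \sum_(i < t.+1) n ^ i)%N by rewrite predn_exp.
set s := (\sum_(i < t.+1) _)%N in order_eq *.
have psi_sub : (n.-1 * s).-primitive_root psi by rewrite -order_eq.
have psi_neq0 : psi != 0.
  by rewrite (prim_root_eq0 psi_prim) -lt0n (leq_ltn_trans _
    (frobenius_exp_lt n_gt1 d_gt1 (ltn0Sn t))) ?expn_gt0 ?n_gt0.
pose c (j : 'I_n) := if j : nat is j'.+1 then psi ^+ (j' * s) else 0.
have c_fixed j : c j ^+ n = c j.
  by case: j => [[|j] ?]; rewrite /c /= ?expr0n ?gtn_eqF ?prim_root_subfield_fixed.
have c_inj : injective c.
  have psi_pow_neq0 j : psi ^+ (j * s) != 0 by rewrite expf_neq0.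
  move=> [[|j] j_n] [[|k] k_n]; rewrite /c /= => c_eq; apply: val_inj => //=.
  - by move: (psi_pow_neq0 k); rewrite -c_eq eqxx.
  - by move: (psi_pow_neq0 j); rewrite c_eq eqxx.
  by congr _.+1; apply: (prim_root_subfield_inj psi_sub) c_eq; lia.
have psi_not_fixed : psi ^+ n != psi.
  apply/eqP => psi_fixed; have psi_conj : psi ^+ (n ^ 1) = psi ^+ (n ^ 0).
    by rewrite expn1 expn0 expr1.
  by have := @conj_inj 1 0 d_gt1 (ltn0Sn _) psi_conj.
pose g j := psi + c j.
have g_neq0 j : g j != 0.
  have := affine_neq0_of_not_fixed q_pchar (expr1n _ n) (c_fixed j) (oner_neq0 K)
    psi_not_fixed.
  by rewrite mul1r.
pose i0 : 'I_n := Ordinal n_gt0.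
have g_i0 : g i0 = psi by rewrite /g /c /= addr0.
apply: (lattice_packing_of_subproducts (h := fun j => g j ^+ n.-1) (i0 := i0))
  => [||S1 S2 S1_t S2_t].
- have s_gt0 : (0 < s)%N.
    by have := prim_order_gt0 psi_sub; rewrite muln_gt0 => /andP[].
  by have := dvdn_prim_root psi_sub (dvdn_mull n.-1 (dvdnn s)); rewrite mulnK // g_i0.
- by move=> j; rewrite -exprM -order_eq -K_card expf_card_pred.
rewrite !prodrXl; set A := \prod_(i in S1) g i; set B := \prod_(i in S2) g i => AB_pow.
have prod_neq0 S : \prod_(i in S) g i != 0.
  by rewrite prodf_seq_neq0; apply/allP => i _; rewrite g_neq0 implybT.
pose lam := A / B.
have lam_neq0 : lam != 0 by rewrite mulf_neq0 ?invr_eq0 ?prod_neq0.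
have lam_fixed : lam ^+ n = lam.
  rewrite -(prednK n_gt0) exprS expr_div_n AB_pow divff ?mulr1 //.
  by rewrite expf_neq0 ?prod_neq0.
apply: (eq_set_of_linear_prod_evals (a := fun=> 1) (b := c) (fun=> oner_neq0 K) _ lam_neq0
  (rs := [seq psi ^+ (n ^ e) | e <- iota 0 t.+1])) => [i j | | | | y].
- by rewrite /= !divr1 => /c_inj.
- rewrite map_inj_in_uniq ?iota_uniq // => i j.
  by rewrite !mem_iota => /andP[_ i_t] /andP[_ j_t] /conj_inj; apply.
- by rewrite size_map size_iota ltnS.
- by rewrite size_map size_iota ltnS.
move=> /mapP [e _ ->].
apply: linear_prod_evals_conjugate q_pchar _ c_fixed lam_fixed _ => [i|].
  exact: expr1n.
have eval_psi S : (linear_prod (fun=> 1) c S).[psi] = \prod_(i in S) g i.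
  by rewrite horner_linear_prod; apply: eq_bigr => i _; rewrite mul1r.
by rewrite !eval_psi divfK ?prod_neq0.
Qed.

Lemma dist_div_inv_leq (R : realFieldType) (a b f d : R) :
  0 < b -> 1 <= f -> f * a <= b + d -> b <= f * a + d -> `|a / b - f^-1| <= d / b.
Proof.
move=> b_gt0 f_ge1 fa_b b_fa; have f_gt0 : 0 < f by lra.
have -> : a / b - f^-1 = (f * a - b) / b / f by field; rewrite !gt_eqF.
have d_ge0 : 0 <= d by lra.
rewrite normrM normfV (gtr0_norm f_gt0) ler_pdivrMr //.
rewrite (le_trans _ (ler_peMr (divr_ge0 d_ge0 (ltW b_gt0)) f_ge1)) //.
by rewrite normrM normfV (gtr0_norm b_gt0) ler_pM2r ?invr_gt0 // ler_norml; lra.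
Qed.

Lemma binomial_sum_ratio_cvg t (B : nat -> nat) (eps : rat) :
  (0 < t)%N -> 0 < eps -> (forall n, (t <= n)%N -> (n ^ t <= B n <= n.+1 ^ t)%N) ->
  exists N, forall n, (N <= n)%N ->
    `|(\sum_(i < t.+1) 'C(n, i))%N%:R / (B n)%:R - (t`!)%:R^-1| < eps.
Proof.
move=> t_gt0 eps_gt0 B_bounds; pose C := (t * t`! + t * t.+1 * 2 ^ t.-1)%N.
exists ((Num.truncn (C%:R / eps)).+1 + t)%N => n n_N.
have t_n : (t <= n)%N by lia.
have n_gt0 : (0 < n)%N by lia.
have /andP[n_B B_n] := B_bounds n t_n.
have t_bounds : (0 < t <= n)%N by rewrite t_gt0.
have [A_B B_A] := fact_binomial_sum_near t_bounds (B_bounds n t_n).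
have B_gt0 : 0 < (B n)%:R :> rat by rewrite ltr0n (leq_trans _ n_B) // expn_gt0 n_gt0.
apply: le_lt_trans (dist_div_inv_leq (d := (C * n ^ t.-1)%N%:R) B_gt0 _ _ _) _.
- by rewrite ler1n fact_gt0.
- by rewrite -natrM -natrD ler_nat (leq_trans A_B) // leq_add2l leq_mul2r leq_addr orbT.
- by rewrite -natrM -natrD ler_nat (leq_trans B_A) // leq_add2l leq_mul2r leq_addl orbT.
have n_P_B : (n * n ^ t.-1 <= B n)%N by rewrite -expnS prednK.
apply: (@le_lt_trans _ _ (C%:R / n%:R)).
  rewrite ler_pdivrMr // mulrAC ler_pdivlMr ?ltr0n // -!natrM ler_nat -mulnA.
  by rewrite leq_mul2l mulnC n_P_B orbT.
rewrite ltr_pdivrMr ?ltr0n // -ltr_pdivrMl // mulrC (lt_le_trans (truncnS_gt _)) //.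
by rewrite ler_nat (leq_trans _ n_N) ?leq_addr.
Qed.

Lemma finField_prime_power_card q d : prime_power q -> (0 < d)%N ->
  exists K : finFieldType, [pchar K].-nat q /\ #|K| = (q ^ d)%N.
Proof.
case=> p [a [p_prime [a_gt0 ->]]] d_gt0.
have ad_gt0 : (0 < a * d)%N by rewrite muln_gt0 a_gt0.
have [K p_pchar K_card] := pPrimePowerField p_prime ad_gt0.
exists K; rewrite K_card expnM; split=> //.
by rewrite pnatX (eq_pnat _ (pcharf_eq p_pchar)) pnat_id.
Qed.

Lemma geometric_sum_natr n t : (1 < n)%N ->
  (\sum_(i < t.+1) n ^ i)%N%:R = ((n ^ t.+1)%N%:R - 1) / (n%:R - 1) :> rat.
Proof.
move=> n_gt1; have n1_neq0 : n%:R - 1 != 0 :> rat by rewrite subr_eq0 pnatr_eq1 gtn_eqF.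
rewrite natrX subrX1 [(_ - 1) * _]mulrC mulfK // natr_sum.
by apply: eq_bigr => i _; rewrite natrX.
Qed.

Lemma geometric_sum_bounds n t :
  (n ^ t <= \sum_(i < t.+1) n ^ i <= n.+1 ^ t)%N.
Proof.
apply/andP; split; first by rewrite big_ord_recr /= leq_addl.
rewrite -[n.+1]addn1 addnC expnDn leq_sum // => i _.
by rewrite exp1n mul1n leq_pmull // bin_gt0 -ltnS.
Qed.

Lemma lattice_packing_delta1 n t : prime_power n.+1 -> (2 <= t)%N -> (t <= n)%N ->
  lattice_packing_with_density n t 1 0 (delta1 n t).
Proof.
move=> q_pp t_ge2 t_n.
have [K [q_pchar K_card]] := finField_prime_power_card q_pp (ltnW t_ge2).
have := lattice_packing_from_field_pow_t q_pchar K_card t_ge2 (leq_trans (ltnW t_ge2) t_n).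
by rewrite /delta1 ball_size_binary -subn1 natrB ?expn_gt0.
Qed.

Lemma lattice_packing_delta2 n t : prime_power n -> (2 <= t)%N -> (t <= n)%N ->
  lattice_packing_with_density n t 1 0 (delta2 n t).
Proof.
move=> q_pp t_ge2 t_n; have [K [q_pchar K_card]] := finField_prime_power_card q_pp (ltn0Sn t).
have n_gt1 : (1 < n)%N by lia.
have := lattice_packing_from_field_pow_t1 q_pchar K_card n_gt1 (ltnW t_ge2).
by rewrite /delta2 ball_size_binary geometric_sum_natr.
Qed.

Lemma delta1_cvg t (eps : rat) : (2 <= t)%N -> 0 < eps ->
  exists N : nat, forall n : nat, (N <= n)%N -> `|delta1 n t - (t`!)%:R^-1| < eps.
Proof.
move=> t_ge2 eps_gt0.
have [|N N_eps] := binomial_sum_ratio_cvg (B := fun n => (n.+1 ^ t).-1) (ltnW t_ge2) eps_gt0.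
  by move=> n _; rewrite -ltnS prednK ?expn_gt0 // ltn_exp2r ?leq_pred //; lia.
by exists N => n /N_eps; rewrite /delta1 -subn1 natrB ?expn_gt0.
Qed.

Lemma delta2_cvg t (eps : rat) : (2 <= t)%N -> 0 < eps ->
  exists N : nat, forall n : nat, (N <= n)%N -> `|delta2 n t - (t`!)%:R^-1| < eps.
Proof.
move=> t_ge2 eps_gt0.
have [|N N_eps] := binomial_sum_ratio_cvg (B := fun n => (\sum_(i < t.+1) n ^ i)%N)
  (ltnW t_ge2) eps_gt0 => [n _|]; first exact: geometric_sum_bounds.
exists (maxn N 2) => n; rewrite geq_max => /andP[/N_eps dist_lt n_ge2].
by rewrite /delta2 -geometric_sum_natr.
Qed.

Theorem corollary6 :
  [/\ (forall n t : nat, prime_power n.+1 -> (2 <= t)%N -> (t <= n)%N ->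
         lattice_packing_with_density n t 1 0 (delta1 n t)),
      (forall n t : nat, prime_power n -> (2 <= t)%N -> (t <= n)%N ->
         lattice_packing_with_density n t 1 0 (delta2 n t)),
      (forall (t : nat) (eps : rat), (2 <= t)%N -> 0 < eps ->
         exists N : nat, forall n : nat, (N <= n)%N -> prime_power n.+1 ->
           `|delta1 n t - (t`!)%:R^-1| < eps) &
      (forall (t : nat) (eps : rat), (2 <= t)%N -> 0 < eps ->
         exists N : nat, forall n : nat, (N <= n)%N -> prime_power n ->
           `|delta2 n t - (t`!)%:R^-1| < eps)].
Proof.
split; [exact: lattice_packing_delta1 | exact: lattice_packing_delta2 | |].
- move=> t eps t_ge2 eps_gt0; have [N N_eps] := delta1_cvg t_ge2 eps_gt0.
  by exists N => n /N_eps.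
- move=> t eps t_ge2 eps_gt0; have [N N_eps] := delta2_cvg t_ge2 eps_gt0.
  by exists N => n /N_eps.
Qed.
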